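(* Let $m\ge2$ be an integer and let $A$ be a left brace with $A^{(3)}=A^{m+1}=\{0\}$. Let $a\in A$, and define $a_1=a$ and $a_{j+1}=a*a_j$ for $j\ge1$. Let $t=\sum_{i=1}^m t_ia_i$ with $t_i\in\mathbb{Z}$. Then the inverse of $t$ in the group $(A,\cdot)$ is \[t^{-1}=\sum_{j=1}^m\Bigl(-\sum_{k=0}^{j-1}\binom{-t_1}{k}t_{j-k}\Bigr)a_j.\]
   Context: A left brace $(A,+,\cdot)$ is a set $A$ with two binary operations such that $(A,+)$ is an abelian group, $(A,\cdot)$ is a group, and $a(b+c)=ab-a+ac$ for all $a,b,c\in A$. In a left brace, $a*b=-a+ab-b$. For subsets $L,M\subseteq A$, $L*M$ is the subgroup of $(A,+)$ generated by $\{l*m\mid l\in L,m\in M\}$. Set $A^{(1)}=A$, $A^{(r+1)}=A^{(r)}*A$, and $A^1=A$, $A^{r+1}=A*A^r$ for $r\ge1$. Generalised binomial coefficients: for $n\in\mathbb{Z}$ and integer $k\ge0$, $\binom{n}{0}=1$ and $\binom{n}{k}=\frac{n(n-1)\cdots(n-k+1)}{k!}$ for $k>0$. *)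

From mathcomp Require Import all_boot all_order all_algebra.
Set Implicit Arguments. Unset Strict Implicit. Unset Printing Implicit Defensive.
Import GRing.Theory Num.Theory.
Local Open Scope ring_scope.

(* A left brace: (A,+) is the abelian group of the zmodType A; (A,mul) is a
   group with identity [one] and inverse [inv]; plus the brace compatibility. *)
Definition is_left_brace (A : zmodType) (mul : A -> A -> A) (inv : A -> A)
  (one : A) : Prop :=
  [/\ (forall x y z, mul x (mul y z) = mul (mul x y) z),
      (forall x, mul one x = x /\ mul x one = x),
      (forall x, mul (inv x) x = one /\ mul x (inv x) = one) &
      (forall a b c, mul a (b + c) = mul a b - a + mul a c)].

Definition bstar (A : zmodType) (mul : A -> A -> A) (a b : A) : A :=
  - a + mul a b - b.

Definition addgen (A : zmodType) (S : A -> Prop) : A -> Prop :=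
  fun x => forall P : A -> Prop,
    P 0 -> (forall u v, P u -> P v -> P (u + v)) -> (forall u, P u -> P (- u)) ->
    (forall u, S u -> P u) -> P x.

Definition setstar (A : zmodType) (mul : A -> A -> A) (L M : A -> Prop) : A -> Prop :=
  addgen (fun x => exists l m, [/\ L l, M m & x = bstar mul l m]).

(* rser r = A^(r), lser r = A^r, for r >= 1 (index 0 is also A) *)
Fixpoint rser (A : zmodType) (mul : A -> A -> A) (r : nat) : A -> Prop :=
  match r with
  | 0 | 1 => fun _ => True
  | r'.+1 => setstar mul (rser mul r') (fun _ => True)
  end.
Fixpoint lser (A : zmodType) (mul : A -> A -> A) (r : nat) : A -> Prop :=
  match r with
  | 0 | 1 => fun _ => True
  | r'.+1 => setstar mul (fun _ => True) (lser mul r')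
  end.

(* a_1 = a, a_{j+1} = a * a_j  (for j >= 1) *)
Definition aseq (A : zmodType) (mul : A -> A -> A) (a : A) (j : nat) : A :=
  iter j.-1 (bstar mul a) a.

(* generalised binomial coefficient n(n-1)...(n-k+1)/k!  (exact division) *)
Definition gbinom (n : int) (k : nat) : int :=
  ((\prod_(i < k) (n - (i : nat)%:Z)) %/ (k`!)%:Z)%Z.

From HB Require Import structures.
From mathcomp Require Import all_boot all_order all_algebra.
From mathcomp Require Import ring.
Import GRing.Theory Num.Theory.
Local Open Scope ring_scope.
Set Implicit Arguments. Unset Strict Implicit. Unset Printing Implicit Defensive.

(* In a left brace the maps  lam x : y |-> -x + x y  are
   additive, lam (x y) = lam x \o lam y  and  x y = x + lam x y; hence
   lam x y = - x  forces  inv x = y.  The hypothesis A^(3) = 0 says that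
   (x * y) * z = 0, i.e. lam (x * y) = id; since  x y = (x + y) + x * y  this
   makes  x |-> lam x  a homomorphism from (A,+), so  lam (a *~ n) = lam a ^ n.
   Moreover a_i = a * a_(i-1) lies in the kernel of lam for i >= 2, while
   lam a a_i = a_i + a_(i+1), and a_(m+1) = 0 because a_(m+1) lies in A^(m+1).
   For  t = sum_i t_i a_i  this gives  lam t = lam (a *~ t_1), and by Pascal's
   rule for generalised binomial coefficients
     lam (a *~ n) (sum_i c_i a_i) = sum_j (sum_k binom(n,k) c_(j-k)) a_j.
   Taking n = - t_1 and c = - t yields s with lam t s = -t, so inv t = s. *)

Definition ffactz (n : int) (k : nat) : int := \prod_(i < k) (n - (i : nat)%:Z).

Lemma ffactz_addr1 (n : int) (k : nat) :
  ffactz (n + 1) k.+1 = ffactz n k.+1 + k.+1%:Z * ffactz n k.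
Proof.
rewrite /ffactz big_ord_recl big_ord_recr /=.
rewrite (eq_bigr (fun i : 'I_k => n - (i : nat)%:Z)); last first.
  by move=> i _; rewrite /bump /= add1n intS opprD addrA addrK.
rewrite intS; ring.
Qed.

Lemma ffactz0S (k : nat) : ffactz 0 k.+1 = 0.
Proof. by rewrite /ffactz big_ord_recl /= subr0 mul0r. Qed.

(* k! divides n (n-1) ... (n-k+1) for every integer n, by induction on n in
   both directions using Pascal's rule; so the division in gbinom is exact. *)
Lemma fact_dvd_ffactz (k : nat) (n : int) : ((k`!)%:Z %| ffactz n k)%Z.
Proof.
elim: k n => [|k IHk] n; first by rewrite fact0 dvd1z.
have dvd_step m : ((k.+1`!)%:Z %| k.+1%:Z * ffactz m k)%Z.
  by rewrite factS PoszM dvdz_mul.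
elim/int_rec: n => [|n IHn|n IHn]; first by rewrite ffactz0S dvdz0.
  by rewrite intS addrC ffactz_addr1 rpredD.
have pred_n : - n.+1%:Z + 1 = - n%:Z by rewrite intS opprD addrAC subrr add0r.
have := ffactz_addr1 (- n.+1%:Z) k; rewrite pred_n => /eqP.
by rewrite -subr_eq => /eqP <-; rewrite rpredB.
Qed.

Lemma gbinomE (n : int) (k : nat) : gbinom n k * (k`!)%:Z = ffactz n k.
Proof. by rewrite /gbinom divzK // fact_dvd_ffactz. Qed.

Lemma gbinom_n0 (n : int) : gbinom n 0 = 1.
Proof. by rewrite /gbinom big_ord0 fact0 divz1. Qed.

Lemma gbinom_0S (k : nat) : gbinom 0 k.+1 = 0.
Proof. by rewrite /gbinom -/(ffactz 0 k.+1) ffactz0S div0z. Qed.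

Lemma gbinom_pascal (n : int) (k : nat) :
  gbinom (n + 1) k.+1 = gbinom n k.+1 + gbinom n k.
Proof.
have fact_neq0 : (k.+1`!)%:Z != 0 by rewrite eqz_nat -lt0n fact_gt0.
apply: (mulIf fact_neq0).
by rewrite mulrDl !gbinomE ffactz_addr1 factS PoszM mulrCA gbinomE.
Qed.

(* The coefficient sequence  j |-> sum_(k < j) binom(n, k) c_(j-k), i.e. the
   coordinates of  lam a ^ n  applied to  sum_i c_i a_i. *)
Definition binom_conv (n : int) (c : nat -> int) (j : nat) : int :=
  \sum_(0 <= k < j) gbinom n k * c (j - k)%N.

Lemma binom_conv0 (n : int) (c : nat -> int) : binom_conv n c 0 = 0.
Proof. by rewrite /binom_conv big_geq. Qed.

(* Raising n by one shifts and adds: this is the effect of one more lam a. *)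
Lemma binom_conv_addr1 (n : int) (c : nat -> int) (j : nat) :
  binom_conv (n + 1) c j = binom_conv n c j + binom_conv n c j.-1.
Proof.
case: j => [|j]; first by rewrite !binom_conv0 addr0.
rewrite /binom_conv !big_nat_recl //= !gbinom_n0 -addrA; congr (_ + _).
rewrite -big_split /=; apply: eq_bigr => k _.
by rewrite gbinom_pascal subSS mulrDl.
Qed.

Lemma binom_conv_0n (c : nat -> int) (j : nat) :
  (0 < j)%N -> binom_conv 0 c j = c j.
Proof.
case: j => [//|j] _; rewrite /binom_conv big_nat_recl //= gbinom_n0 mul1r subn0.
by rewrite big1 ?addr0 // => k _; rewrite gbinom_0S mul0r.
Qed.

Lemma binom_convN (n : int) (c : nat -> int) (j : nat) :
  binom_conv n (fun i => - c i) j = - binom_conv n c j.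
Proof. by rewrite /binom_conv -sumrN; apply: eq_bigr => k _; rewrite mulrN. Qed.

Lemma rser3_bstar_bstar (A : zmodType) (mul : A -> A -> A) :
  (forall x, rser mul 3 x -> x = 0) ->
  forall x y z, bstar mul (bstar mul x y) z = 0.
Proof.
move=> A3_0 x y z; apply: A3_0 => P _ _ _ gen; apply: gen.
exists (bstar mul x y), z; split=> // Q _ _ _ genQ; apply: genQ.
by exists x, y.
Qed.

Lemma aseq_lser (A : zmodType) (mul : A -> A -> A) (a : A) (j : nat) :
  lser mul j.+1 (aseq mul a j.+1).
Proof.
elim: j => [//|j IHj] P _ _ _ gen; apply: gen.
by exists a, (aseq mul a j.+1); split.
Qed.

Section LeftBrace.

Variables (A : zmodType) (mul : A -> A -> A) (inv : A -> A) (one : A).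
Hypothesis brace : is_left_brace mul inv one.

Definition lam (x y : A) : A := - x + mul x y.

Lemma mul_lam (x y : A) : mul x y = x + lam x y.
Proof. by rewrite /lam addNKr. Qed.

(* From x (0 + 0) = x 0 - x + x 0: right multiplication by 0 is trivial,
   hence the multiplicative identity is the additive zero. *)
Lemma mulx0 (x : A) : mul x 0 = x.
Proof.
case: brace => _ _ _ distr; have := distr x 0 0; rewrite addr0.
move/(congr1 (fun w => w - mul x 0)); rewrite addrK subrr => /eqP.
by rewrite eq_sym subr_eq0 => /eqP.
Qed.

Lemma one_eq0 : one = 0.
Proof. by have := mulx0 one; case: brace => _ unit _ _; rewrite (unit 0).1. Qed.

Lemma lam_is_zmod_morphism (x : A) : zmod_morphism (lam x).
Proof.
have lamD y z : lam x (y + z) = lam x y + lam x z.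
  by case: brace => _ _ _ distr; rewrite /lam distr !addrA.
by move=> y z; apply/eqP; rewrite eq_sym subr_eq -lamD subrK.
Qed.

HB.instance Definition _ (x : A) :=
  GRing.isZmodMorphism.Build A A (lam x) (lam_is_zmod_morphism x).

Lemma lam0x (z : A) : lam 0 z = z.
Proof.
rewrite /lam oppr0 add0r -one_eq0; case: brace => _ unit _ _; exact: (unit z).1.
Qed.

Lemma lamM (x y z : A) : lam (mul x y) z = lam x (lam y z).
Proof.
rewrite [lam y z]/lam raddfD raddfN /= /lam opprD opprK.
by case: brace => assoc _ _ _; rewrite assoc addrA [x - _]addrC addrK.
Qed.

(* The group inverse is read off from lam: x y = x + lam x y = 0. *)
Lemma inv_from_lam (x y : A) : lam x y = - x -> inv x = y.
Proof.
move=> lam_xy; have xy0 : mul x y = 0 by rewrite mul_lam lam_xy subrr.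
have := mulx0 (inv x); rewrite -xy0.
by case: brace => assoc unit inverse _; rewrite assoc (inverse x).1 (unit y).1.
Qed.

Definition lam_trivial (q : A) : Prop := forall z, lam q z = z.

(* Adding an element of the kernel does not change lam, since q p = p + q. *)
Lemma lam_addr_trivial (p q : A) : lam_trivial q -> forall z, lam (p + q) z = lam p z.
Proof.
move=> q_triv z; have qp : mul q p = p + q.
  by rewrite mul_lam q_triv addrC.
by rewrite -qp lamM q_triv.
Qed.

Section ThirdIdealZero.

Hypothesis bstar2_eq0 : forall x y z, bstar mul (bstar mul x y) z = 0.

(* Every x * y lies in the kernel of lam, as (x * y) * z = lam (x * y) z - z. *)
Lemma lam_trivial_bstar (x y : A) : lam_trivial (bstar mul x y).
Proof.
move=> z; have := bstar2_eq0 x y z.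
by rewrite /bstar -/(lam _ z) => /eqP; rewrite subr_eq0 => /eqP.
Qed.

(* lam is a homomorphism from (A,+): x y = (x + y) + x * y. *)
Lemma lamD (x y z : A) : lam (x + y) z = lam x (lam y z).
Proof.
have xy : mul x y = (x + y) + bstar mul x y.
  by rewrite /bstar !addrA [x + y - x]addrAC subrr add0r addrAC subrr add0r.
by rewrite -lamM xy (lam_addr_trivial _ (lam_trivial_bstar x y)).
Qed.

Lemma lamNK (x z : A) : lam (- x) (lam x z) = z.
Proof. by rewrite -lamD addNr lam0x. Qed.

Lemma lam_trivialD (p q : A) : lam_trivial p -> lam_trivial q -> lam_trivial (p + q).
Proof. by move=> p_triv q_triv z; rewrite lamD q_triv p_triv. Qed.

Lemma lam_trivialMz (q : A) (n : int) : lam_trivial q -> lam_trivial (q *~ n).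
Proof.
move=> q_triv; have lam_qMn k : lam_trivial (q *+ k).
  by elim: k => [|k IHk] z; rewrite ?mulr0n ?lam0x // mulrS lamD IHk q_triv.
case: n => k z; first exact: lam_qMn.
by rewrite NegzE mulrNz -[in LHS](lam_qMn k.+1 z) lamNK.
Qed.

Lemma lam_trivial_sum (I : Type) (r : seq I) (P : pred I) (F : I -> A) :
  (forall i, P i -> lam_trivial (F i)) -> lam_trivial (\sum_(i <- r | P i) F i).
Proof.
move=> F_triv; apply: (big_ind lam_trivial) => //; first exact: lam0x.
exact: lam_trivialD.
Qed.

Section PowerSequence.

Variables (a : A) (m : nat).
Hypothesis m_gt0 : (0 < m)%N.
Hypothesis aseq_m1 : aseq mul a m.+1 = 0.

(* lam a a_i = a_i + a * a_i = a_i + a_(i+1). *)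
Lemma lam_aseq (i : nat) :
  (0 < i)%N -> lam a (aseq mul a i) = aseq mul a i + aseq mul a i.+1.
Proof.
case: i => [//|i] _; rewrite [aseq mul a i.+2]/aseq /= -/(aseq mul a i.+1).
by rewrite /bstar -/(lam a _) addrC subrK.
Qed.

Lemma lam_trivial_aseq (i : nat) : (1 < i)%N -> lam_trivial (aseq mul a i).
Proof.
case: i => [|[|i]] // _; rewrite [aseq mul a i.+2]/aseq /= -/(aseq mul a i.+1).
exact: lam_trivial_bstar.
Qed.

Definition comb (c : nat -> int) : A := \sum_(1 <= i < m.+1) aseq mul a i *~ c i.

Lemma lam_comb (c : nat -> int) (z : A) : lam (comb c) z = lam (a *~ c 1%N) z.
Proof.
rewrite /comb big_ltn // lam_addr_trivial // big_nat_cond.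
apply: lam_trivial_sum => i /andP[/andP[i_gt1 _] _].
exact/lam_trivialMz/lam_trivial_aseq.
Qed.

Lemma lam_a_comb (c : nat -> int) :
  c 0%N = 0 -> lam a (comb c) = comb (fun j => c j + c j.-1).
Proof.
move=> c0; rewrite /comb raddf_sum.
rewrite (eq_big_nat _ _ (F2 := fun i => aseq mul a i *~ c i + aseq mul a i.+1 *~ c i));
  last by move=> i /andP[i_gt0 _]; rewrite raddfMz /= lam_aseq // mulrzDl.
rewrite [RHS](eq_bigr (fun j => aseq mul a j *~ c j + aseq mul a j *~ c j.-1));
  last by move=> j _; rewrite mulrzDr.
rewrite !big_split /=; congr (_ + _).
rewrite big_nat_recr //= aseq_m1 mul0rz addr0.
by rewrite [RHS]big_ltn // c0 mulr0z add0r [RHS]big_add1.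
Qed.

Lemma lam_aMz_comb (n : int) (c : nat -> int) :
  lam (a *~ n) (comb c) = comb (binom_conv n c).
Proof.
have lam_a_conv k : lam a (comb (binom_conv k c)) = comb (binom_conv (k + 1) c).
  rewrite lam_a_comb ?binom_conv0 //.
  by apply: eq_bigr => j _; rewrite binom_conv_addr1.
have lam_aMz_addr1 k z : lam (a *~ (k + 1)) z = lam a (lam (a *~ k) z).
  by rewrite mulrzDr mulr1z addrC lamD.
elim/int_rec: n => [|n IHn|n IHn].
- rewrite mulr0z lam0x; apply: eq_big_nat => i /andP[i_gt0 _].
  by rewrite binom_conv_0n.
- by rewrite intS addrC lam_aMz_addr1 IHn lam_a_conv.
- have pred_n : - n.+1%:Z + 1 = - n%:Z by rewrite intS opprD addrAC subrr add0r.
  apply: (can_inj (lamNK a)).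
  by rewrite -lam_aMz_addr1 pred_n IHn -pred_n lam_a_conv.
Qed.

Lemma inv_comb (c : nat -> int) :
  inv (comb c) = comb (binom_conv (- c 1%N) (fun i => - c i)).
Proof.
apply: inv_from_lam; rewrite lam_comb -lam_aMz_comb -lamD -mulrzDr subrr.
by rewrite mulr0z lam0x /comb -sumrN; apply: eq_bigr => i _; rewrite mulrNz.
Qed.

End PowerSequence.
End ThirdIdealZero.
End LeftBrace.

Theorem mainTheorem13 (m : nat) (A : zmodType) (mul : A -> A -> A)
  (inv : A -> A) (one : A) (a : A) (t : nat -> int) :
  (2 <= m)%N ->
  is_left_brace mul inv one ->
  (forall x, rser mul 3 x -> x = 0) ->
  (forall x, lser mul m.+1 x -> x = 0) ->
  inv (\sum_(1 <= i < m.+1) aseq mul a i *~ t i) =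
  \sum_(1 <= j < m.+1)
     aseq mul a j *~ (- \sum_(0 <= k < j) gbinom (- t 1%N) k * t (j - k)%N).
Proof.
move=> m_ge2 brace A3_0 Am1_0.
have m_gt0 : (0 < m)%N by apply: ltnW.
have aseq_m1 : aseq mul a m.+1 = 0 by apply: Am1_0; exact: aseq_lser.
have := inv_comb brace (rser3_bstar_bstar A3_0) m_gt0 aseq_m1 t.
rewrite /comb => ->; apply: eq_bigr => j _.
by rewrite binom_convN.
Qed.
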